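(* The operator $\Gamma$ defined below is the Choi–Jamiolkowski operator of a separable CPTP map from $\mathbf L(\mathcal H_1\otimes\mathcal H_3\otimes\mathcal H_5)$ to $\mathbf L(\mathcal H_2\otimes\mathcal H_4\otimes\mathcal H_6)$, and this map cannot be implemented by any finite-round three-party LOCC protocol in which the first party acts $\mathcal H_1\to\mathcal H_2$, the second $\mathcal H_3\to\mathcal H_4$ and the third $\mathcal H_5\to\mathcal H_6$.
   Context: $\mathcal H_1,\mathcal H_3,\mathcal H_5\cong\mathbb C^2$ and $\mathcal H_2,\mathcal H_4,\mathcal H_6\cong\mathbb C^2\otimes\mathbb C^2$. On each pair ($\mathcal H_1\otimes\mathcal H_2$, $\mathcal H_3\otimes\mathcal H_4$, $\mathcal H_5\otimes\mathcal H_6$) define $|\mathbf 0\rangle=|0\rangle|00\rangle$, $|\mathbf 1\rangle=|1\rangle|01\rangle$, $|\mathbf 2\rangle=|+\rangle|10\rangle$, $|\mathbf 3\rangle=|-\rangle|11\rangle$, with $|\pm\rangle=(|0\rangle\pm|1\rangle)/\sqrt2$, and $[\mathbf x]:=|\mathbf x\rangle\langle\mathbf x|$. Let $T=\{(0,0,0),(1,2,0),(2,3,0),(3,1,0),(0,3,1),(1,1,1),(2,0,1),(3,2,1),(0,1,2),(1,3,2),(2,2,2),(3,0,2),(0,2,3),(1,0,3),(2,1,3),(3,3,3)\}$ and $\Gamma=\frac12\sum_{(a,b,c)\in T}[\mathbf a]\otimes[\mathbf b]\otimes[\mathbf c]$. The Choi–Jamiolkowski operator of a linear map $\mathcal M:\mathbf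 L(\mathcal H_{in})\to\mathbf L(\mathcal H_{out})$ is $\sum_{k,l}|k\rangle\langle l|\otimes\mathcal M(|k\rangle\langle l|)$ in the computational basis of $\mathcal H_{in}$. A map is separable if it has Kraus operators of product form $E^{(1)}_k\otimes E^{(2)}_k\otimes E^{(3)}_k$. Finite-round three-party LOCC: finitely many rounds in which one party at a time applies a local quantum instrument and broadcasts its outcome, with later operations allowed to depend on earlier outcomes, all outcomes summed at the end. *)

From HB Require Import structures.
From mathcomp Require Import all_boot all_order all_algebra.
From mathcomp Require Import complex.
From mathcomp Require Import reals Rstruct.
Set Implicit Arguments. Unset Strict Implicit. Unset Printing Implicit Defensive.
Import Order.TTheory GRing.Theory Num.Theory.
Local Open Scope ring_scope.

Definition C : numClosedFieldType := (Rdefinitions.R)[i].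

(* Finite-dimensional Hilbert spaces are C^I for a finite type I of basis   *)
(* labels (the computational basis).  An operator H_I -> H_J is a J x I     *)
(* matrix, represented as a function of (row, column).  Tensor products of  *)
(* spaces correspond to products of basis-label types.                      *)
Definition vec (I : finType) := I -> C.
Definition op (J I : finType) := J -> I -> C.

Definition zeroop (J I : finType) : op J I := fun _ _ => 0.
Definition addop (J I : finType) (A B : op J I) : op J I := fun j i => A j i + B j i.
Definition scaleop (J I : finType) (a : C) (A : op J I) : op J I := fun j i => a * A j i.
Definition sumop (J I : finType) (n : nat) (F : 'I_n -> op J I) : op J I :=
  fun j i => \sum_(k < n) F k j i.
Definition mulop (K J I : finType) (A : op K J) (B : op J I) : op K I :=
  fun k i => \sum_(j : J) A k j * B j i.
Definition adjop (J I : finType) (A : op J I) : op I J := fun i j => (A j i)^*.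
Definition idop (I : finType) : op I I := fun i j => (i == j)%:R.
Definition tensop (J1 I1 J2 I2 : finType) (A : op J1 I1) (B : op J2 I2)
  : op (J1 * J2)%type (I1 * I2)%type := fun j i => A j.1 i.1 * B j.2 i.2.
Definition traceop (I : finType) (X : op I I) : C := \sum_(i : I) X i i.
Definition ketbra (I : finType) (v w : vec I) : op I I := fun i j => v i * (w j)^*.
Definition conjop (J I : finType) (K : op J I) (X : op I I) : op J J :=
  mulop (mulop K X) (adjop K).

Definition psd (I : finType) (X : op I I) : Prop :=
  (forall i j, X i j = (X j i)^*) /\
  (forall v : vec I, 0 <= \sum_(i : I) \sum_(j : I) (v i)^* * X i j * v j).

Definition qmap (I O : finType) := op I I -> op O O.

Definition linear_qmap (I O : finType) (Phi : qmap I O) : Prop :=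
  forall (a : C) (X Y : op I I), Phi (addop (scaleop a X) Y) = addop (scaleop a (Phi X)) (Phi Y).

(* id_n (x) Phi acting on L(C^n (x) H_I) *)
Definition ampl (n : nat) (I O : finType) (Phi : qmap I O)
  (X : op ('I_n * I)%type ('I_n * I)%type) : op ('I_n * O)%type ('I_n * O)%type :=
  fun x y => Phi (fun p q => X (x.1, p) (y.1, q)) x.2 y.2.

Definition completely_positive (I O : finType) (Phi : qmap I O) : Prop :=
  forall (n : nat) (X : op ('I_n * I)%type ('I_n * I)%type), psd X -> psd (ampl Phi X).

Definition trace_preserving (I O : finType) (Phi : qmap I O) : Prop :=
  forall X : op I I, traceop (Phi X) = traceop X.

Definition CPTP (I O : finType) (Phi : qmap I O) : Prop :=
  [/\ linear_qmap Phi, completely_positive Phi & trace_preserving Phi].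

(* Choi-Jamiolkowski operator  sum_{k,l} |k><l| (x) Phi(|k><l|)  on H_in (x) H_out *)
Definition unitop (I : finType) (k l : I) : op I I := fun a b => ((a == k) && (b == l))%:R.
Definition choi (I O : finType) (Phi : qmap I O) : op (I * O)%type (I * O)%type :=
  fun x y => Phi (unitop x.1 y.1) x.2 y.2.

(* Tripartite maps: party k has input space H_{Ik} and output space H_{Ok}; *)
(* the global spaces are (H_I1 (x) H_I2) (x) H_I3 etc.                      *)
Definition tri (A B D : finType) : finType := ((A * B) * D)%type.

Definition tens3 (J1 I1 J2 I2 J3 I3 : finType)
  (A : op J1 I1) (B : op J2 I2) (D : op J3 I3) : op (tri J1 J2 J3) (tri I1 I2 I3) :=
  tensop (tensop A B) D.

Definition separable3 (I1 I2 I3 O1 O2 O3 : finType)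
  (Phi : qmap (tri I1 I2 I3) (tri O1 O2 O3)) : Prop :=
  exists (n : nat) (E1 : 'I_n -> op O1 I1) (E2 : 'I_n -> op O2 I2) (E3 : 'I_n -> op O3 I3),
    forall X, Phi X = sumop (fun k => conjop (tens3 (E1 k) (E2 k) (E3 k)) X).

(* A local quantum instrument of a party with current space H_A, new space *)
(* H_A', and outcomes 'I_n is given by, for each outcome i, a CP map in     *)
(* Kraus form  X |-> sum_(j < m i) K i j X (K i j)^dagger, the instrument   *)
(* being trace preserving overall.                                          *)
Definition instrument_complete (A A' : finType) (n : nat) (m : 'I_n -> nat)
  (K : forall i : 'I_n, 'I_(m i) -> op A' A) : Prop :=
  sumop (fun i => sumop (fun j => mulop (adjop (K i j)) (K i j))) = @idop A.

(* A protocol tree: the current local spaces of the three parties are the    *)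
(* indices A B D; at each node one party applies a local instrument and      *)
(* broadcasts the outcome i, and the rest of the protocol (next i) may       *)
(* depend on it.  A leaf (Done) is only allowed when the local spaces are    *)
(* the prescribed output spaces O1 O2 O3.  Trees are finite, so every        *)
(* protocol has finitely many rounds.                                        *)
Inductive locc_protocol (O1 O2 O3 : finType) : finType -> finType -> finType -> Type :=
| Done : locc_protocol O1 O2 O3 O1 O2 O3
| Round1 (A B D A' : finType) (n : nat) (m : 'I_n -> nat)
    (K : forall i : 'I_n, 'I_(m i) -> op A' A) of instrument_complete K &
    (forall i : 'I_n, locc_protocol O1 O2 O3 A' B D) : locc_protocol O1 O2 O3 A B D
| Round2 (A B D B' : finType) (n : nat) (m : 'I_n -> nat)
    (K : forall i : 'I_n, 'I_(m i) -> op B' B) of instrument_complete K &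
    (forall i : 'I_n, locc_protocol O1 O2 O3 A B' D) : locc_protocol O1 O2 O3 A B D
| Round3 (A B D D' : finType) (n : nat) (m : 'I_n -> nat)
    (K : forall i : 'I_n, 'I_(m i) -> op D' D) of instrument_complete K &
    (forall i : 'I_n, locc_protocol O1 O2 O3 A B D') : locc_protocol O1 O2 O3 A B D.

(* The map implemented by a protocol, all outcomes summed at the end. *)
Fixpoint locc_map (O1 O2 O3 A B D : finType) (P : locc_protocol O1 O2 O3 A B D)
  {struct P} : qmap (tri A B D) (tri O1 O2 O3) :=
  match P in locc_protocol _ _ _ A B D return qmap (tri A B D) (tri O1 O2 O3) with
  | Done => fun X => X
  | Round1 A B D A' n m K _ next => fun X =>
      sumop (fun i => locc_map (next i)
        (sumop (fun j => conjop (tens3 (K i j) (@idop B) (@idop D)) X)))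
  | Round2 A B D B' n m K _ next => fun X =>
      sumop (fun i => locc_map (next i)
        (sumop (fun j => conjop (tens3 (@idop A) (K i j) (@idop D)) X)))
  | Round3 A B D D' n m K _ next => fun X =>
      sumop (fun i => locc_map (next i)
        (sumop (fun j => conjop (tens3 (@idop A) (@idop B) (K i j)) X)))
  end.

Definition finite_round_LOCC (I1 I2 I3 O1 O2 O3 : finType)
  (Phi : qmap (tri I1 I2 I3) (tri O1 O2 O3)) : Prop :=
  exists P : locc_protocol O1 O2 O3 I1 I2 I3, forall X, locc_map P X = Phi X.

(* H1,H3,H5 = C^2 (labels 'I_2);  H2,H4,H6 = C^2 (x) C^2 (labels 'I_2*'I_2) *)
Definition Q : finType := 'I_2.
Definition QQ : finType := ('I_2 * 'I_2)%type.
Definition Pair : finType := (Q * QQ)%type.     (* H_odd (x) H_even *)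

Definition e0 : vec Q := fun i => (val i == 0%N)%:R.
Definition e1 : vec Q := fun i => (val i == 1%N)%:R.
Definition eplus : vec Q := fun i => (sqrtC 2)^-1 * (e0 i + e1 i).
Definition eminus : vec Q := fun i => (sqrtC 2)^-1 * (e0 i - e1 i).
Definition e2 (b1 b2 : nat) : vec QQ := fun jk => ((val jk.1 == b1) && (val jk.2 == b2))%:R.

Definition bket (x : nat) : vec Pair := fun p =>
  match x with
  | 0%N => e0 p.1 * e2 0 0 p.2
  | 1%N => e1 p.1 * e2 0 1 p.2
  | 2%N => eplus p.1 * e2 1 0 p.2
  | 3%N => eminus p.1 * e2 1 1 p.2
  | _ => 0
  end.
Definition bproj (x : nat) : op Pair Pair := ketbra (bket x) (bket x).

Definition Tset : seq (nat * nat * nat) :=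
  [:: (0,0,0); (1,2,0); (2,3,0); (3,1,0);
      (0,3,1); (1,1,1); (2,0,1); (3,2,1);
      (0,1,2); (1,3,2); (2,2,2); (3,0,2);
      (0,2,3); (1,0,3); (2,1,3); (3,3,3)]%N.

(* Gamma on (H1 (x) H2) (x) (H3 (x) H4) (x) (H5 (x) H6) *)
Definition Gamma : op (tri Pair Pair Pair) (tri Pair Pair Pair) :=
  fun x y => 2^-1 * \sum_(t <- Tset) tens3 (bproj t.1.1) (bproj t.1.2) (bproj t.2) x y.

Definition Hin : finType := tri Q Q Q.
Definition Hout : finType := tri QQ QQ QQ.

(* canonical identification (H1 H3 H5) (x) (H2 H4 H6) ~ (H1 H2)(H3 H4)(H5 H6) *)
Definition regroup (x : (Hin * Hout)%type) : tri Pair Pair Pair :=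
  (((x.1.1.1, x.2.1.1), (x.1.1.2, x.2.1.2)), (x.1.2, x.2.2)).

Definition GammaChoi : op (Hin * Hout)%type (Hin * Hout)%type :=
  fun x y => Gamma (regroup x) (regroup y).

(* Gamma is 1/2 times the sum over T of the product projectors [a] (x) [b] (x) [c], so the sixteen
   product operators 2^(-1/2) <a| (x) <b| (x) <c|, read as maps H1 H3 H5 -> H2 H4 H6, are Kraus
   operators of a separable map with Choi operator Gamma; their completeness is a finite
   integer identity.

   A finite-round LOCC protocol is a Kraus sum over its branches of products of the parties'
   accumulated local Kraus operators.  Matching Gamma forces every such product to kill the
   "forbidden" product inputs built from the probes |0>, |1>, |+>, |->.  Integer certificates
   then show, by induction over the protocol tree, that on every branch each party's POVM
   element has the probe weights of a multiple of the identity, and at a leaf this is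
   incompatible with all three being nonzero.  Summing over branches, the weight of
   |0>|0>|0> would vanish, whereas it is 1 at the root. *)

From HB Require Import structures.
From mathcomp Require Import all_boot all_order all_algebra.
From mathcomp Require Import complex.
From mathcomp Require Import reals Rstruct.
From mathcomp Require Import ring.
From Stdlib Require Import FunctionalExtensionality.
Set Implicit Arguments. Unset Strict Implicit. Unset Printing Implicit Defensive.
Import Order.TTheory GRing.Theory Num.Theory.
Local Open Scope ring_scope.

Lemma op_ext (J I : finType) (A B : op J I) : (forall j i, A j i = B j i) -> A = B.
Proof.
by move=> AB; apply: functional_extensionality => j; apply: functional_extensionality.
Qed.

Lemma sum_pair (X Y : finType) (F : X * Y -> C) :
  \sum_(p : X * Y) F p = \sum_(x : X) \sum_(y : Y) F (x, y).
Proof. by rewrite pair_bigA /=; apply: eq_bigr => -[]. Qed.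

Lemma sum_tri_mul (A B D : finType) (f : A -> C) (g : B -> C) (h : D -> C) :
  \sum_(p : tri A B D) f p.1.1 * g p.1.2 * h p.2 =
  (\sum_a f a) * (\sum_b g b) * (\sum_d h d).
Proof.
rewrite !sum_pair /= -mulrA mulr_suml; apply: eq_bigr => a _.
rewrite mulr_suml mulr_sumr; apply: eq_bigr => b _.
by rewrite !mulr_sumr; apply: eq_bigr => d _; rewrite !mulrA.
Qed.

Lemma big3_mul (X Y Z : Type) (s : seq X) (t : seq Y) (w : seq Z)
    (f : X -> C) (g : Y -> C) (h : Z -> C) :
  \sum_(x <- s) \sum_(y <- t) \sum_(z <- w) f x * g y * h z =
  (\sum_(x <- s) f x) * (\sum_(y <- t) g y) * (\sum_(z <- w) h z).
Proof.
rewrite -mulrA big_distrl /=; apply: eq_bigr => x _.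
rewrite big_distrl big_distrr /=; apply: eq_bigr => y _.
by rewrite big_distrr big_distrr /=; apply: eq_bigr => z _; rewrite mulrA.
Qed.

Lemma exchange_big2 (I J P Q : finType) (F : I -> J -> P -> Q -> C) :
  \sum_i \sum_j \sum_p \sum_q F i j p q = \sum_p \sum_q \sum_i \sum_j F i j p q.
Proof.
under eq_bigr do rewrite exchange_big /=.
under eq_bigr do under eq_bigr do rewrite exchange_big /=.
rewrite exchange_big /=; apply: eq_bigr => p _.
by rewrite exchange_big.
Qed.

Lemma psumr_seq_eq0 (T : Type) (s : seq T) (F : T -> C) :
  (forall x, 0 <= F x) -> \sum_(x <- s) F x = 0 -> forall x, List.In x s -> F x = 0.
Proof.
move=> F_ge0; elim: s => [|y s IHs] //=; rewrite big_cons => /eqP.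
rewrite paddr_eq0 ?sumr_ge0 // => /andP[/eqP Fy0 /eqP Fs0] x [<-|xs] //.
exact: IHs.
Qed.

Lemma big_seq_neq0 (T : Type) (s : seq T) (F : T -> C) :
  \sum_(x <- s) F x != 0 -> exists2 x, List.In x s & F x != 0.
Proof.
elim: s => [|y s IHs]; first by rewrite big_nil eqxx.
rewrite big_cons; have [->|Fy_neq0 _] := eqVneq (F y) 0; last by exists y; [left|].
by rewrite add0r => /IHs[x xs Fx_neq0]; exists x; [right|].
Qed.

Lemma In_flatten (T : Type) (x : T) (ss : seq (seq T)) :
  List.In x (flatten ss) <-> exists2 s, List.In s ss & List.In x s.
Proof.
elim: ss => [|s ss IHss] /=; first by split=> // -[].
rewrite List.in_app_iff IHss; split.
  by case=> [xs|[s' ss' xs']]; [exists s; [left|] | exists s'; [right|]].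
by case=> s' [<-|ss'] xs'; [left | right; exists s'].
Qed.

Lemma In_index_enum (T : finType) (i : T) : List.In i (index_enum T).
Proof.
have : i \in index_enum T by rewrite mem_index_enum.
by elim: (index_enum T) => [|y r IHr] //=; rewrite in_cons => /orP[/eqP->|/IHr]; [left|right].
Qed.

Definition opcoord (J I : finType) (L : op J I) (o : J) (u : vec I) : C :=
  \sum_i L o i * u i.
Definition sqnorm (J I : finType) (L : op J I) (u : vec I) : C :=
  \sum_o opcoord L o u * (opcoord L o u)^*.
Definition kraus_weight (J I : finType) (Ms : seq (op J I)) (u : vec I) : C :=
  \sum_(m <- Ms) sqnorm m u.
Definition prodvec (I1 I2 I3 : finType) (u1 : vec I1) (u2 : vec I2) (u3 : vec I3)
  : vec (tri I1 I2 I3) := fun i => u1 i.1.1 * u2 i.1.2 * u3 i.2.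

Lemma opcoord_tens3 (J1 I1 J2 I2 J3 I3 : finType)
    (m1 : op J1 I1) (m2 : op J2 I2) (m3 : op J3 I3) o u1 u2 u3 :
  opcoord (tens3 m1 m2 m3) o (prodvec u1 u2 u3) =
  opcoord m1 o.1.1 u1 * opcoord m2 o.1.2 u2 * opcoord m3 o.2 u3.
Proof.
by rewrite /opcoord -sum_tri_mul; apply: eq_bigr => i _; rewrite /tens3 /tensop /prodvec; ring.
Qed.

Lemma sqnorm_tens3 (J1 I1 J2 I2 J3 I3 : finType)
    (m1 : op J1 I1) (m2 : op J2 I2) (m3 : op J3 I3) u1 u2 u3 :
  sqnorm (tens3 m1 m2 m3) (prodvec u1 u2 u3) = sqnorm m1 u1 * sqnorm m2 u2 * sqnorm m3 u3.
Proof.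
rewrite /sqnorm -sum_tri_mul; apply: eq_bigr => o _.
by rewrite opcoord_tens3 !rmorphM /=; ring.
Qed.

Lemma opcoord_mulop (K J I : finType) (A : op K J) (B : op J I) k u :
  opcoord (mulop A B) k u = opcoord A k (fun j => opcoord B j u).
Proof.
rewrite /opcoord /mulop; under eq_bigr do rewrite mulr_suml.
rewrite exchange_big; apply: eq_bigr => j _.
by rewrite mulr_sumr; apply: eq_bigr => i _; rewrite mulrA.
Qed.

Lemma sqnorm_mulop (K J I : finType) (A : op K J) (B : op J I) u :
  sqnorm (mulop A B) u = sqnorm A (fun j => opcoord B j u).
Proof. by apply: eq_bigr => k _; rewrite opcoord_mulop. Qed.

Lemma opcoord_lin (J I : finType) (L : op J I) o (x y z : vec I) (al be : C) :
  (forall i, x i = al * y i + be * z i) -> opcoord L o x = al * opcoord L o y + be * opcoord L o z.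
Proof.
move=> x_def; rewrite /opcoord !mulr_sumr -big_split /=.
by apply: eq_bigr => i _; rewrite x_def; ring.
Qed.

Lemma sqnorm_gram (J I : finType) (L : op J I) (v : vec I) :
  sqnorm L v = \sum_a \sum_b (v a)^* * mulop (adjop L) L a b * v b.
Proof.
have term o : opcoord L o v * (opcoord L o v)^* =
    \sum_a \sum_b (v a)^* * ((L o a)^* * L o b) * v b.
  rewrite /opcoord rmorph_sum mulr_sumr; apply: eq_bigr => a _.
  by rewrite mulr_suml; apply: eq_bigr => b _; rewrite rmorphM /=; ring.
rewrite /sqnorm /mulop /adjop; under eq_bigr do rewrite term.
under [RHS]eq_bigr do under eq_bigr do rewrite mulr_sumr mulr_suml.
by rewrite exchange_big; apply: eq_bigr => a _; rewrite exchange_big.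
Qed.

Lemma instrument_sqnorm (A A' : finType) (n : nat) (m : 'I_n -> nat)
    (K : forall i : 'I_n, 'I_(m i) -> op A' A) (v : vec A) :
  instrument_complete K ->
  \sum_(i < n) \sum_(j < m i) sqnorm (K i j) v = \sum_a v a * (v a)^*.
Proof.
move=> K_id.
under eq_bigr do under eq_bigr do rewrite sqnorm_gram.
have -> : \sum_(i < n) \sum_(j < m i) \sum_a \sum_b
            (v a)^* * mulop (adjop (K i j)) (K i j) a b * v b =
          \sum_a \sum_b (v a)^* * idop a b * v b.
  rewrite -{}K_id /sumop; under eq_bigr do rewrite exchange_big /=.
  rewrite exchange_big; apply: eq_bigr => a _.
  under eq_bigr do rewrite exchange_big /=.
  rewrite exchange_big; apply: eq_bigr => b _.
  by rewrite mulr_sumr mulr_suml; apply: eq_bigr => i _; rewrite mulr_sumr mulr_suml.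
apply: eq_bigr => a _; rewrite (bigD1 a) //= big1 ?addr0 => [|b b_neq_a].
  by rewrite /idop eqxx mulr1 mulrC.
by rewrite /idop eq_sym (negbTE b_neq_a) mulr0 mul0r.
Qed.

Lemma conjopE (J I : finType) (K : op J I) (Y : op I I) a b :
  conjop K Y a b = \sum_i \sum_j K a i * Y i j * (K b j)^*.
Proof.
rewrite /conjop /mulop /adjop exchange_big; apply: eq_bigr => i _.
by rewrite mulr_suml.
Qed.

Lemma conjopM (K J I : finType) (A : op K J) (B : op J I) (X : op I I) :
  conjop (mulop A B) X = conjop A (conjop B X).
Proof.
apply: op_ext => a b; rewrite !conjopE /mulop.
have expandL p q : (\sum_i A a i * B i p) * X p q * (\sum_j A b j * B j q)^* =
    \sum_i \sum_j A a i * B i p * X p q * (B j q)^* * (A b j)^*.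
  rewrite rmorph_sum !mulr_suml; apply: eq_bigr => i _.
  by rewrite mulr_sumr; apply: eq_bigr => j _; rewrite rmorphM /=; ring.
have expandR i j : A a i * conjop B X i j * (A b j)^* =
    \sum_p \sum_q A a i * B i p * X p q * (B j q)^* * (A b j)^*.
  rewrite conjopE mulr_sumr mulr_suml; apply: eq_bigr => p _.
  by rewrite mulr_sumr mulr_suml; apply: eq_bigr => q _; ring.
under eq_bigr do under eq_bigr do rewrite expandL.
under [RHS]eq_bigr do under eq_bigr do rewrite expandR.
by rewrite exchange_big2.
Qed.

Lemma mulop_tens3 (K1 J1 I1 K2 J2 I2 K3 J3 I3 : finType)
    (A : op K1 J1) (B : op K2 J2) (D : op K3 J3)
    (A' : op J1 I1) (B' : op J2 I2) (D' : op J3 I3) :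
  mulop (tens3 A B D) (tens3 A' B' D') = tens3 (mulop A A') (mulop B B') (mulop D D').
Proof.
apply: op_ext => k i; rewrite /mulop /tens3 /tensop -sum_tri_mul.
by apply: eq_bigr => j _; ring.
Qed.

Lemma mul1op (J I : finType) (M : op J I) : mulop (@idop J) M = M.
Proof.
apply: op_ext => a b; rewrite /mulop /idop (bigD1 a) //= eqxx mul1r big1 ?addr0 //.
by move=> j /negbTE j_neq_a; rewrite eq_sym j_neq_a mul0r.
Qed.

Lemma mulop1 (J I : finType) (M : op J I) : mulop M (@idop I) = M.
Proof.
apply: op_ext => a b; rewrite /mulop /idop (bigD1 b) //= eqxx mulr1 big1 ?addr0 //.
by move=> j /negbTE j_neq_b; rewrite j_neq_b mulr0.
Qed.

Lemma tens3_id (I1 I2 I3 : finType) :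
  tens3 (@idop I1) (@idop I2) (@idop I3) = @idop (tri I1 I2 I3).
Proof.
apply: op_ext => [[[a1 a2] a3] [[b1 b2] b3]]; rewrite /tens3 /tensop /idop /= !xpair_eqE.
by case: (a1 == b1); case: (a2 == b2); case: (a3 == b3); rewrite /= ?mul1r ?mul0r.
Qed.

Lemma conjop1 (I : finType) (X : op I I) : conjop (@idop I) X = X.
Proof.
rewrite /conjop; have -> : adjop (@idop I) = @idop I.
  by apply: op_ext => a b; rewrite /adjop /idop rmorph_nat eq_sym.
by rewrite mul1op mulop1.
Qed.

(** * Kraus decomposition of LOCC protocols *)

Definition kraus_sum (J I : finType) (Ls : seq (op J I)) (X : op I I) : op J J :=
  fun a b => \sum_(L <- Ls) conjop L X a b.

Lemma kraus_sum_unitop (I O : finType) (Ls : seq (op O I)) (x y : I * O) :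
  kraus_sum Ls (unitop x.1 y.1) x.2 y.2 = \sum_(L <- Ls) L x.2 x.1 * (L y.2 y.1)^*.
Proof.
apply: eq_bigr => L _; rewrite conjopE (bigD1 x.1) //= [X in _ + X]big1 ?addr0; last first.
  by move=> i /negbTE i_neq; rewrite big1 // => j _; rewrite /unitop i_neq mulr0 mul0r.
rewrite (bigD1 y.1) //= [X in _ + X]big1 ?addr0; last first.
  by move=> j /negbTE j_neq; rewrite /unitop eqxx j_neq mulr0 mul0r.
by rewrite /unitop !eqxx mulr1.
Qed.

Lemma kraus_choi_form (I O : finType) (Ls : seq (op O I)) (G : op (I * O)%type (I * O)%type) :
  (forall x y : (I * O)%type, \sum_(L <- Ls) L x.2 x.1 * (L y.2 y.1)^* = G x y) ->
  forall o u, \sum_(L <- Ls) opcoord L o u * (opcoord L o u)^* =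
              \sum_i \sum_j u i * (u j)^* * G (i, o) (j, o).
Proof.
move=> choiG o u.
under [RHS]eq_bigr do under eq_bigr do rewrite -choiG /= mulr_sumr.
under [RHS]eq_bigr do rewrite exchange_big /=.
rewrite [RHS]exchange_big; apply: eq_bigr => L _.
rewrite /opcoord rmorph_sum mulr_suml; apply: eq_bigr => i _.
by rewrite mulr_sumr; apply: eq_bigr => j _; rewrite rmorphM /=; ring.
Qed.

Lemma conjop_kraus_sum (J K I : finType) (A : op K J) (Ls : seq (op J I)) X :
  conjop A (kraus_sum Ls X) = kraus_sum [seq mulop A L | L <- Ls] X.
Proof.
apply: op_ext => a b; rewrite [RHS]/kraus_sum big_map.
under [RHS]eq_bigr do rewrite conjopM conjopE.
rewrite conjopE /kraus_sum /=.
under eq_bigr do under eq_bigr do rewrite mulr_sumr mulr_suml.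
under eq_bigr do rewrite exchange_big /=.
by rewrite exchange_big.
Qed.

Lemma sumop_kraus_sum (J I : finType) (n : nat) (F : 'I_n -> seq (op J I)) X :
  sumop (fun i => kraus_sum (F i) X) = kraus_sum (flatten [seq F i | i <- index_enum 'I_n]) X.
Proof. by apply: op_ext => a b; rewrite /sumop /kraus_sum big_flatten big_map. Qed.

Definition tens3_kraus (O1 O2 O3 I1 I2 I3 : finType) (M1s : seq (op O1 I1))
    (M2s : seq (op O2 I2)) (M3s : seq (op O3 I3)) : seq (op (tri O1 O2 O3) (tri I1 I2 I3)) :=
  flatten [seq [seq tens3 m1 m2 m3 | m2 <- M2s, m3 <- M3s] | m1 <- M1s].

Lemma big_tens3_kraus (O1 O2 O3 I1 I2 I3 : finType) (M1s : seq (op O1 I1))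
    (M2s : seq (op O2 I2)) (M3s : seq (op O3 I3)) (F : op (tri O1 O2 O3) (tri I1 I2 I3) -> C) :
  \sum_(L <- tens3_kraus M1s M2s M3s) F L =
  \sum_(m1 <- M1s) \sum_(m2 <- M2s) \sum_(m3 <- M3s) F (tens3 m1 m2 m3).
Proof.
rewrite big_flatten big_map; apply: eq_bigr => m1 _.
by rewrite (big_allpairs_dep (h := fun m2 m3 => tens3 m1 m2 m3)).
Qed.

Lemma In_tens3_kraus (O1 O2 O3 I1 I2 I3 : finType) (M1s : seq (op O1 I1))
    (M2s : seq (op O2 I2)) (M3s : seq (op O3 I3)) m1 m2 m3 :
  List.In m1 M1s -> List.In m2 M2s -> List.In m3 M3s ->
  List.In (tens3 m1 m2 m3) (tens3_kraus M1s M2s M3s).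
Proof.
move=> m1_in m2_in m3_in; apply/In_flatten; exists [seq tens3 m1 m2' m3' | m2' <- M2s, m3' <- M3s].
  by apply/List.in_map_iff; exists m1.
apply/In_flatten; exists [seq tens3 m1 m2 m3' | m3' <- M3s].
  by apply/List.in_map_iff; exists m2.
by apply/List.in_map_iff; exists m3.
Qed.

Definition after_outcome (A A' I : finType) (n : nat) (m : 'I_n -> nat)
    (K : forall i : 'I_n, 'I_(m i) -> op A' A) (i : 'I_n) (Ms : seq (op A I)) : seq (op A' I) :=
  [seq mulop (K i j) x | x <- Ms, j <- index_enum 'I_(m i)].

(* Kraus operators of [P] run after the parties have applied the local Kraus operators [M1s],
   [M2s], [M3s]; the map of [P] itself is recovered from [[:: idop]] (see [locc_map_kraus]). *)
Fixpoint protocol_kraus (O1 O2 O3 A B D : finType) (P : locc_protocol O1 O2 O3 A B D)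
    (I1 I2 I3 : finType) {struct P} :
    seq (op A I1) -> seq (op B I2) -> seq (op D I3) -> seq (op (tri O1 O2 O3) (tri I1 I2 I3)) :=
  match P in locc_protocol _ _ _ A B D return
    seq (op A I1) -> seq (op B I2) -> seq (op D I3) -> seq (op (tri O1 O2 O3) (tri I1 I2 I3)) with
  | Done => fun M1s M2s M3s => tens3_kraus M1s M2s M3s
  | Round1 A B D A' n m K _ next => fun M1s M2s M3s =>
      flatten [seq protocol_kraus (next i) (after_outcome K i M1s) M2s M3s
              | i <- index_enum 'I_n]
  | Round2 A B D B' n m K _ next => fun M1s M2s M3s =>
      flatten [seq protocol_kraus (next i) M1s (after_outcome K i M2s) M3s
              | i <- index_enum 'I_n]
  | Round3 A B D D' n m K _ next => fun M1s M2s M3s =>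
      flatten [seq protocol_kraus (next i) M1s M2s (after_outcome K i M3s)
              | i <- index_enum 'I_n]
  end.

Lemma In_flatten_enum (T : Type) (n : nat) (f : 'I_n -> seq T) i x :
  List.In x (f i) -> List.In x (flatten [seq f i | i <- index_enum 'I_n]).
Proof.
move=> x_in; apply/In_flatten; exists (f i) => //.
by apply/List.in_map_iff; exists i; split => //; apply: In_index_enum.
Qed.

Lemma kraus_sum_tens3E (O1 O2 O3 I1 I2 I3 : finType) (M1s : seq (op O1 I1))
    (M2s : seq (op O2 I2)) (M3s : seq (op O3 I3)) X a b :
  kraus_sum (tens3_kraus M1s M2s M3s) X a b =
  \sum_(m1 <- M1s) \sum_(m2 <- M2s) \sum_(m3 <- M3s) conjop (tens3 m1 m2 m3) X a b.
Proof. exact: big_tens3_kraus. Qed.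

Section LocalRound.
Variables (A B D A' B' D' I1 I2 I3 : finType) (p : nat).
Variables (M1s : seq (op A I1)) (M2s : seq (op B I2)) (M3s : seq (op D I3)).
Variable X : op (tri I1 I2 I3) (tri I1 I2 I3).

Lemma round1_kraus (K : 'I_p -> op A' A) :
  sumop (fun j => conjop (tens3 (K j) (@idop B) (@idop D)) (kraus_sum (tens3_kraus M1s M2s M3s) X))
  = kraus_sum (tens3_kraus [seq mulop (K j) x | x <- M1s, j <- index_enum 'I_p] M2s M3s) X.
Proof.
apply: op_ext => a b; rewrite /sumop.
under eq_bigr do rewrite conjop_kraus_sum /kraus_sum big_map big_tens3_kraus.
rewrite kraus_sum_tens3E (big_allpairs_dep (h := fun x j => mulop (K j) x)) /=.
rewrite exchange_big; apply: eq_bigr => m1 _.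
apply: eq_bigr => j _; apply: eq_bigr => m2 _; apply: eq_bigr => m3 _.
by rewrite mulop_tens3 !mul1op.
Qed.

Lemma round2_kraus (K : 'I_p -> op B' B) :
  sumop (fun j => conjop (tens3 (@idop A) (K j) (@idop D)) (kraus_sum (tens3_kraus M1s M2s M3s) X))
  = kraus_sum (tens3_kraus M1s [seq mulop (K j) x | x <- M2s, j <- index_enum 'I_p] M3s) X.
Proof.
apply: op_ext => a b; rewrite /sumop.
under eq_bigr do rewrite conjop_kraus_sum /kraus_sum big_map big_tens3_kraus.
rewrite kraus_sum_tens3E exchange_big; apply: eq_bigr => m1 _.
rewrite (big_allpairs_dep (h := fun x j => mulop (K j) x)) /=.
rewrite exchange_big; apply: eq_bigr => m2 _; apply: eq_bigr => j _; apply: eq_bigr => m3 _.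
by rewrite mulop_tens3 !mul1op.
Qed.

Lemma round3_kraus (K : 'I_p -> op D' D) :
  sumop (fun j => conjop (tens3 (@idop A) (@idop B) (K j)) (kraus_sum (tens3_kraus M1s M2s M3s) X))
  = kraus_sum (tens3_kraus M1s M2s [seq mulop (K j) x | x <- M3s, j <- index_enum 'I_p]) X.
Proof.
apply: op_ext => a b; rewrite /sumop.
under eq_bigr do rewrite conjop_kraus_sum /kraus_sum big_map big_tens3_kraus.
rewrite kraus_sum_tens3E exchange_big; apply: eq_bigr => m1 _.
rewrite exchange_big; apply: eq_bigr => m2 _.
rewrite (big_allpairs_dep (h := fun x j => mulop (K j) x)) /=.
rewrite exchange_big; apply: eq_bigr => m3 _; apply: eq_bigr => j _.
by rewrite mulop_tens3 !mul1op.
Qed.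

End LocalRound.

Lemma locc_map_kraus (O1 O2 O3 A B D : finType) (P : locc_protocol O1 O2 O3 A B D)
    (I1 I2 I3 : finType) (M1s : seq (op A I1)) (M2s : seq (op B I2)) (M3s : seq (op D I3)) X :
  locc_map P (kraus_sum (tens3_kraus M1s M2s M3s) X) = kraus_sum (protocol_kraus P M1s M2s M3s) X.
Proof.
elim: P I1 I2 I3 M1s M2s M3s X => {A B D}
  [|A B D A' n m K _ next IH|A B D B' n m K _ next IH|A B D D' n m K _ next IH]
  I1 I2 I3 M1s M2s M3s X //=; rewrite -sumop_kraus_sum; congr sumop;
  apply: functional_extensionality => i.
- by rewrite round1_kraus IH.
- by rewrite round2_kraus IH.
- by rewrite round3_kraus IH.
Qed.

Lemma kraus_weight_after_outcome (J J' I : finType) (n : nat) (m : 'I_n -> nat)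
    (K : forall i : 'I_n, 'I_(m i) -> op J' J) (Ms : seq (op J I)) (u : vec I) :
  instrument_complete K ->
  \sum_(i < n) kraus_weight (after_outcome K i Ms) u = kraus_weight Ms u.
Proof.
move=> K_complete; rewrite /kraus_weight.
under eq_bigr do rewrite (big_allpairs_dep (h := fun x j => mulop (K _ j) x)) /=.
rewrite exchange_big; apply: eq_bigr => x _.
under eq_bigr do under eq_bigr do rewrite sqnorm_mulop.
by rewrite (instrument_sqnorm _ K_complete).
Qed.

Lemma protocol_kraus_weight (O1 O2 O3 A B D : finType) (P : locc_protocol O1 O2 O3 A B D)
    (I1 I2 I3 : finType) M1s M2s M3s (u1 : vec I1) (u2 : vec I2) (u3 : vec I3) :
  \sum_(L <- protocol_kraus P M1s M2s M3s) sqnorm L (prodvec u1 u2 u3) =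
  kraus_weight M1s u1 * kraus_weight M2s u2 * kraus_weight M3s u3.
Proof.
elim: P I1 I2 I3 M1s M2s M3s u1 u2 u3 => {A B D}
  [|A B D A' n m K HK next IH|A B D B' n m K HK next IH|A B D D' n m K HK next IH]
  I1 I2 I3 M1s M2s M3s u1 u2 u3 /=.
- rewrite big_tens3_kraus /kraus_weight -big3_mul.
  by do 3!(apply: eq_bigr => ? _); rewrite sqnorm_tens3.
- rewrite big_flatten big_map; under eq_bigr do rewrite IH.
  by rewrite -!big_distrl /= (kraus_weight_after_outcome _ _ HK).
- rewrite big_flatten big_map; under eq_bigr do rewrite IH.
  by rewrite -big_distrl -big_distrr /= (kraus_weight_after_outcome _ _ HK).
- rewrite big_flatten big_map; under eq_bigr do rewrite IH.
  by rewrite -big_distrr /= (kraus_weight_after_outcome _ _ HK).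
Qed.

Definition kraus_map (I O : finType) (n : nat) (K : 'I_n -> op O I) : qmap I O :=
  fun X => sumop (fun k => conjop (K k) X).

Lemma kraus_map_linear (I O : finType) (n : nat) (K : 'I_n -> op O I) :
  linear_qmap (kraus_map K).
Proof.
move=> a X Y; apply: op_ext => j j'; rewrite /kraus_map /sumop /addop /scaleop.
rewrite mulr_sumr -big_split; apply: eq_bigr => k _ /=.
rewrite !conjopE mulr_sumr -big_split; apply: eq_bigr => i _ /=.
by rewrite mulr_sumr -big_split; apply: eq_bigr => i' _ /=; ring.
Qed.

Lemma kraus_map_TP (I O : finType) (n : nat) (K : 'I_n -> op O I) :
  (forall i i', \sum_k \sum_j K k j i * (K k j i')^* = (i == i')%:R) ->
  trace_preserving (kraus_map K).
Proof.
move=> K_complete X; rewrite /traceop /kraus_map /sumop exchange_big.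
under eq_bigr do under eq_bigr do rewrite conjopE.
rewrite exchange_big2; apply: eq_bigr => i _.
have diag q : \sum_k \sum_j K k j i * X i q * (K k j q)^* = X i q * (i == q)%:R.
  rewrite -K_complete mulr_sumr; apply: eq_bigr => k _.
  by rewrite mulr_sumr; apply: eq_bigr => j _; ring.
under eq_bigr do rewrite diag.
rewrite (bigD1 i) //= eqxx mulr1 big1 ?addr0 // => q /negbTE q_neq.
by rewrite eq_sym q_neq mulr0.
Qed.

Lemma psd_conjop (J I : finType) (K : op J I) (X : op I I) : psd X -> psd (conjop K X).
Proof.
move=> [X_herm X_pos]; split => [a b|v].
  rewrite !conjopE rmorph_sum exchange_big; apply: eq_bigr => j _.
  rewrite rmorph_sum; apply: eq_bigr => i _.
  by rewrite !rmorphM /= conjCK X_herm; ring.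
pose w i := \sum_b (K b i)^* * v b.
have -> : \sum_a \sum_b (v a)^* * conjop K X a b * v b = \sum_i \sum_j (w i)^* * X i j * w j.
  under eq_bigr do under eq_bigr do rewrite conjopE mulr_sumr mulr_suml.
  under eq_bigr do under eq_bigr do under eq_bigr do rewrite mulr_sumr mulr_suml.
  rewrite exchange_big2; apply: eq_bigr => i _; apply: eq_bigr => j _.
  rewrite /w rmorph_sum !mulr_suml; apply: eq_bigr => a _.
  by rewrite mulr_sumr; apply: eq_bigr => b _; rewrite rmorphM /= conjCK; ring.
exact: X_pos.
Qed.

Lemma psd_sumop (I : finType) (m : nat) (F : 'I_m -> op I I) :
  (forall k, psd (F k)) -> psd (sumop F).
Proof.
move=> F_psd; split => [i j|v]; rewrite /sumop.
  by rewrite rmorph_sum; apply: eq_bigr => k _; rewrite (F_psd k).1.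
under eq_bigr do under eq_bigr do rewrite mulr_sumr mulr_suml.
under eq_bigr do rewrite exchange_big /=.
by rewrite exchange_big /=; apply: sumr_ge0 => k _; apply: (F_psd k).2.
Qed.

Lemma ampl_kraus_map (I O : finType) (m : nat) (K : 'I_m -> op O I) (n : nat)
    (X : op ('I_n * I)%type ('I_n * I)%type) :
  ampl (kraus_map K) X = sumop (fun k => conjop (tensop (@idop 'I_n) (K k)) X).
Proof.
apply: op_ext => x y; rewrite /ampl /kraus_map /sumop; apply: eq_bigr => k _.
rewrite !conjopE /= [RHS]sum_pair [RHS](bigD1 x.1) //= [X in _ + X]big1 ?addr0; last first.
  move=> a /negbTE a_neq; rewrite big1 // => p _; rewrite big1 // => z _.
  by rewrite /tensop /idop /= eq_sym a_neq !mul0r.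
apply: eq_bigr => p _; rewrite sum_pair (bigD1 y.1) //= [X in _ + X]big1 ?addr0; last first.
  move=> b /negbTE b_neq; rewrite big1 // => q _.
  by rewrite /tensop /idop /= eq_sym b_neq mul0r rmorph0 mulr0.
by apply: eq_bigr => q _; rewrite /tensop /idop /= !eqxx /= !mul1r.
Qed.

Lemma kraus_map_CP (I O : finType) (m : nat) (K : 'I_m -> op O I) :
  completely_positive (kraus_map K).
Proof.
by move=> n X X_psd; rewrite ampl_kraus_map; apply: psd_sumop => k; apply: psd_conjop.
Qed.

Lemma kraus_map_choi (I O : finType) (m : nat) (K : 'I_m -> op O I) (x y : (I * O)%type) :
  choi (kraus_map K) x y = \sum_k K k x.2 x.1 * (K k y.2 y.1)^*.
Proof.
have := kraus_sum_unitop [seq K k | k <- index_enum 'I_m] x y.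
by rewrite big_map => <-; rewrite /kraus_sum big_map.
Qed.

(** * Probe states *)

(* The input parts |0>, |1>, sqrt 2 |+>, sqrt 2 |-> of the kets |0>, ..., |3>,
   scaled to have integer coordinates. *)
Definition probe (u : nat) : vec Q := fun i =>
  match u with
  | 0%N => (val i == 0%N)%:R
  | 1%N => (val i == 1%N)%:R
  | 2%N => 1
  | _ => if val i == 0%N then 1 else -1
  end.

Definition probe_weight (u : nat) : C := if (u < 2)%N then 1 else 2.

Definition orth_probe (a : nat) : nat :=
  match a with 0%N => 1%N | 1%N => 0%N | 2%N => 3%N | _ => 2%N end.

(* The output part of the ket |x> is the binary expansion of x. *)
Definition label (o : QQ) : nat := (2 * val o.1 + val o.2)%N.

Definition labels (o : Hout) : nat * nat * nat := (label o.1.1, label o.1.2, label o.2).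

Definition forbidden (o : Hout) (u1 u2 u3 : nat) : bool :=
  [|| labels o \notin Tset, u1 == orth_probe (label o.1.1),
      u2 == orth_probe (label o.1.2) | u3 == orth_probe (label o.2)].

Definition Gamma_compatible (L : op Hout Hin) : Prop :=
  forall o u1 u2 u3, forbidden o u1 u2 u3 ->
    opcoord L o (prodvec (probe u1) (probe u2) (probe u3)) = 0.

Lemma label_lt4 o : (label o < 4)%N.
Proof. by case: o => [[[|[|a]] Ha] [[|[|b]] Hb]]. Qed.

Lemma sumQ (F : Q -> C) : \sum_(i : Q) F i = F ord0 + F (lift ord0 ord0).
Proof. by rewrite /Q !big_ord_recl big_ord0 addr0. Qed.

Lemma Tset_lt4 t : t \in Tset -> [/\ (t.1.1 < 4)%N, (t.1.2 < 4)%N & (t.2 < 4)%N].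
Proof.
have all_lt4 : all (fun t => [&& (t.1.1 < 4)%N, (t.1.2 < 4)%N & (t.2 < 4)%N]) Tset by [].
by move/(allP all_lt4)/and3P.
Qed.

Lemma probe_bket_orth (x v : nat) (o : QQ) : (x < 4)%N -> (label o != x) || (v == orth_probe x) ->
  \sum_(i : Q) probe v i * bket x (i, o) = 0.
Proof.
move=> x_lt4 /orP[label_neq|/eqP->].
  rewrite big1 // => i _; move: label_neq; case: o => [[[|[|o1]] H1] [[|[|o2]] H2]] //;
  by case: x x_lt4 => [|[|[|[|x]]]] //= _ _; rewrite /e2 /=; ring.
by rewrite sumQ; case: x x_lt4 => [|[|[|[|x]]]] //= _; rewrite /e0 /e1 /eplus /eminus /=; ring.
Qed.

Definition tket (t : nat * nat * nat) (i : Hin) (o : Hout) : C :=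
  bket t.1.1 (i.1.1, o.1.1) * bket t.1.2 (i.1.2, o.1.2) * bket t.2 (i.2, o.2).

Lemma GammaChoiE (i j : Hin) (o o' : Hout) :
  GammaChoi (i, o) (j, o') = 2^-1 * \sum_(t <- Tset) tket t i o * (tket t j o')^*.
Proof.
rewrite /GammaChoi /Gamma /regroup /=; congr (_ * _); apply: eq_bigr => t _.
by rewrite /tket /tens3 /tensop /bproj /ketbra /= !rmorphM /=; ring.
Qed.

Lemma GammaChoi_form (o : Hout) (u : vec Hin) :
  \sum_i \sum_j u i * (u j)^* * GammaChoi (i, o) (j, o) =
  2^-1 * \sum_(t <- Tset) (\sum_i u i * tket t i o) * (\sum_j u j * tket t j o)^*.
Proof.
under eq_bigr do under eq_bigr do rewrite GammaChoiE !mulr_sumr.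
under eq_bigr do rewrite exchange_big /=.
rewrite exchange_big mulr_sumr; apply: eq_bigr => t _.
rewrite rmorph_sum !mulr_suml mulr_sumr; apply: eq_bigr => i _.
by rewrite !mulr_sumr; apply: eq_bigr => j _; rewrite rmorphM /=; ring.
Qed.

Lemma probe_tket_forbidden t o u1 u2 u3 : t \in Tset -> forbidden o u1 u2 u3 ->
  \sum_i prodvec (probe u1) (probe u2) (probe u3) i * tket t i o = 0.
Proof.
move=> t_in forb; have [t1_lt4 t2_lt4 t3_lt4] := Tset_lt4 t_in.
rewrite (eq_bigr (fun i => (probe u1 i.1.1 * bket t.1.1 (i.1.1, o.1.1)) *
    (probe u2 i.1.2 * bket t.1.2 (i.1.2, o.1.2)) *
    (probe u3 i.2 * bket t.2 (i.2, o.2)))); last first.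
  by move=> i _; rewrite /prodvec /tket; ring.
rewrite (sum_tri_mul (fun x => probe u1 x * bket t.1.1 (x, o.1.1))
  (fun x => probe u2 x * bket t.1.2 (x, o.1.2)) (fun x => probe u3 x * bket t.2 (x, o.2))).
have orth_or_neq x v (o' : QQ) :
    v = orth_probe (label o') -> (label o' != x) || (v == orth_probe x).
  by move=> ->; case: eqP => [->|]; rewrite ?eqxx ?orbT.
case/or4P: forb => [t_notin|/eqP/orth_or_neq o1|/eqP/orth_or_neq o2|/eqP/orth_or_neq o3].
- have : t != labels o by apply: contraNneq t_notin => <-.
  case: t t_in t1_lt4 t2_lt4 t3_lt4 => [[a b] c] /= _ a_lt4 b_lt4 c_lt4.
  rewrite /labels !xpair_eqE !negb_and -orbA => /or3P[neq|neq|neq].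
  + by rewrite (@probe_bket_orth a u1 o.1.1) ?mul0r // eq_sym neq.
  + by rewrite (@probe_bket_orth b u2 o.1.2) ?mulr0 ?mul0r // eq_sym neq.
  + by rewrite (@probe_bket_orth c u3 o.2) ?mulr0 // eq_sym neq.
- by rewrite (probe_bket_orth t1_lt4 (o1 _)) !mul0r.
- by rewrite (probe_bket_orth t2_lt4 (o2 _)) mulr0 mul0r.
- by rewrite (probe_bket_orth t3_lt4 (o3 _)) mulr0.
Qed.

(* Every Kraus operator of a map with Choi operator Gamma kills the forbidden probe inputs,
   because the corresponding quadratic form of Gamma vanishes and is a sum of squares. *)
Lemma kraus_Gamma_compatible (Ls : seq (op Hout Hin)) :
  (forall x y : (Hin * Hout)%type, \sum_(L <- Ls) L x.2 x.1 * (L y.2 y.1)^* = GammaChoi x y) ->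
  forall L, List.In L Ls -> Gamma_compatible L.
Proof.
move=> choiG L L_in o u1 u2 u3 forb.
set u := prodvec (probe u1) (probe u2) (probe u3).
have form0 : \sum_(L <- Ls) opcoord L o u * (opcoord L o u)^* = 0.
  rewrite (kraus_choi_form choiG) GammaChoi_form big_seq big1 ?mulr0 // => t t_in.
  by rewrite probe_tket_forbidden ?mul0r.
have := psumr_seq_eq0 (fun L => mul_conjC_ge0 (opcoord L o u)) form0 L_in.
by move/eqP; rewrite mul_conjC_eq0 => /eqP.
Qed.

Definition probe_coef (a u : nat) : C :=
  if (a < 2)%N then
    (if (u < 2)%N then (a == u)%:R else if (a == 1%N) && (u == 3%N) then -1 else 1)
  else
    (if (u < 2)%N then (if (a == 3%N) && (u == 1%N) then - 2^-1 else 2^-1) else (a == u)%:R).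

Definition probe_coef4 (a u : nat) : int :=
  if (a < 2)%N then (if (u < 2)%N then 4 * (a == u)%:Z else 4) else
    (if (u < 2)%N then 1 else 4 * (a == u)%:Z).

Lemma probe_decomp a u : (a < 4)%N -> (u < 4)%N -> forall i,
  probe u i = probe_coef a u * probe a i + probe_coef (orth_probe a) u * probe (orth_probe a) i.
Proof.
move=> a_lt4 u_lt4 [[|[|i]] Hi] //;
  by case: a a_lt4 => [|[|[|[|a]]]] //= _; case: u u_lt4 => [|[|[|[|u]]]] //= _;
     rewrite /probe_coef /=; field; rewrite ?pnatr_eq0.
Qed.

Lemma probe_coef_conj a u : (probe_coef a u)^* = probe_coef a u.
Proof.
by rewrite /probe_coef; repeat case: ifP => _; rewrite ?rmorphN ?fmorphV ?rmorph1 ?rmorph_nat.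
Qed.

Lemma probe_coef_sq a u : (a < 4)%N -> (u < 4)%N ->
  4%:R * (probe_coef a u * probe_coef a u) = (probe_coef4 a u)%:~R.
Proof.
by case: a => [|[|[|[|a]]]] //= _; case: u => [|[|[|[|u]]]] //= _;
   rewrite /probe_coef /probe_coef4 /=; field; rewrite ?pnatr_eq0.
Qed.

Definition probes (u1 u2 u3 : nat) : vec Hin := prodvec (probe u1) (probe u2) (probe u3).

(* On a Gamma-compatible operator, the output [o] only sees the component of each probe
   along the input part of the ket labelled by [o]. *)
Lemma opcoord_compatible (L : op Hout Hin) o u1 u2 u3 : Gamma_compatible L ->
  (u1 < 4)%N -> (u2 < 4)%N -> (u3 < 4)%N ->
  opcoord L o (probes u1 u2 u3) =
  probe_coef (label o.1.1) u1 * probe_coef (label o.1.2) u2 * probe_coef (label o.2) u3 *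
  opcoord L o (probes (label o.1.1) (label o.1.2) (label o.2)).
Proof.
move=> compat u1_lt4 u2_lt4 u3_lt4; rewrite /probes.
set a := label o.1.1; set b := label o.1.2; set c := label o.2.
have [a_lt4 b_lt4 c_lt4] : [/\ (a < 4)%N, (b < 4)%N & (c < 4)%N] by split; apply: label_lt4.
rewrite (@opcoord_lin _ _ L o _ (prodvec (probe a) (probe u2) (probe u3))
   (prodvec (probe (orth_probe a)) (probe u2) (probe u3))
   (probe_coef a u1) (probe_coef (orth_probe a) u1)); last first.
  by move=> i; rewrite /prodvec (probe_decomp a_lt4 u1_lt4); ring.
rewrite [X in _ + _ * X]compat ?mulr0 ?addr0; last by rewrite /forbidden eqxx orbT.
rewrite (@opcoord_lin _ _ L o _ (prodvec (probe a) (probe b) (probe u3))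
   (prodvec (probe a) (probe (orth_probe b)) (probe u3))
   (probe_coef b u2) (probe_coef (orth_probe b) u2)); last first.
  by move=> i; rewrite /prodvec (probe_decomp b_lt4 u2_lt4); ring.
rewrite [X in _ + _ * X]compat ?mulr0 ?addr0; last by rewrite /forbidden eqxx !orbT.
rewrite (@opcoord_lin _ _ L o _ (prodvec (probe a) (probe b) (probe c))
   (prodvec (probe a) (probe b) (probe (orth_probe c)))
   (probe_coef c u3) (probe_coef (orth_probe c) u3)); last first.
  by move=> i; rewrite /prodvec (probe_decomp c_lt4 u3_lt4); ring.
rewrite [X in _ + _ * X]compat ?mulr0 ?addr0; last by rewrite /forbidden eqxx !orbT.
ring.
Qed.

Definition probe_overlapZ (t : nat * nat * nat) (u1 u2 u3 : nat) : int :=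
  if t \in Tset then probe_coef4 t.1.1 u1 * probe_coef4 t.1.2 u2 * probe_coef4 t.2 u3 else 0.

Lemma coord_sqnorm_compatible (L : op Hout Hin) o u1 u2 u3 : Gamma_compatible L ->
  (u1 < 4)%N -> (u2 < 4)%N -> (u3 < 4)%N ->
  64%:R * (opcoord L o (probes u1 u2 u3) * (opcoord L o (probes u1 u2 u3))^*) =
  (probe_overlapZ (labels o) u1 u2 u3)%:~R *
  (opcoord L o (probes (label o.1.1) (label o.1.2) (label o.2)) *
   (opcoord L o (probes (label o.1.1) (label o.1.2) (label o.2)))^*).
Proof.
move=> compat u1_lt4 u2_lt4 u3_lt4; rewrite /probe_overlapZ; case: ifP => o_in; last first.
  by rewrite compat ?mul0r ?mulr0 // /forbidden o_in.
rewrite /labels /= opcoord_compatible // !rmorphM /= !probe_coef_conj.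
rewrite -(probe_coef_sq (label_lt4 o.1.1) u1_lt4) -(probe_coef_sq (label_lt4 o.1.2) u2_lt4).
by rewrite -(probe_coef_sq (label_lt4 o.2) u3_lt4); ring.
Qed.

Definition kraus_probe_weight (Ls : seq (op Hout Hin)) (u1 u2 u3 : nat) : C :=
  \sum_(L <- Ls) sqnorm L (probes u1 u2 u3).

Definition sum_probes (R : nmodType) (F : nat -> nat -> nat -> R) : R :=
  \sum_(u1 <- iota 0 4) \sum_(u2 <- iota 0 4) \sum_(u3 <- iota 0 4) F u1 u2 u3.

Lemma eq_sum_probes (R : nmodType) (F G : nat -> nat -> nat -> R) :
  (forall a b c, (a < 4)%N -> (b < 4)%N -> (c < 4)%N -> F a b c = G a b c) ->
  sum_probes F = sum_probes G.
Proof.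
move=> FG; rewrite /sum_probes big_seq [RHS]big_seq; apply: eq_bigr => a; rewrite mem_iota => a_lt4.
rewrite big_seq [RHS]big_seq; apply: eq_bigr => b; rewrite mem_iota => b_lt4.
rewrite big_seq [RHS]big_seq; apply: eq_bigr => c; rewrite mem_iota => c_lt4.
exact: FG.
Qed.

Lemma exchange_sum_probes (R : nmodType) (T : Type) (s : seq T) (G : nat -> nat -> nat -> T -> R) :
  sum_probes (fun a b c => \sum_(x <- s) G a b c x) =
  \sum_(x <- s) sum_probes (fun a b c => G a b c x).
Proof.
rewrite /sum_probes; under eq_bigr do under eq_bigr do rewrite exchange_big /=.
by under eq_bigr do rewrite exchange_big /=; rewrite exchange_big.
Qed.

Lemma sum_probes_mull (R : pzSemiRingType) (x : R) F :
  x * sum_probes F = sum_probes (fun a b c => x * F a b c).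
Proof.
rewrite /sum_probes mulr_sumr; apply: eq_bigr => a _.
by rewrite mulr_sumr; apply: eq_bigr => b _; rewrite mulr_sumr.
Qed.

Lemma sum_probes_mulr (R : pzSemiRingType) (x : R) F :
  sum_probes F * x = sum_probes (fun a b c => F a b c * x).
Proof.
rewrite /sum_probes mulr_suml; apply: eq_bigr => a _.
by rewrite mulr_suml; apply: eq_bigr => b _; rewrite mulr_suml.
Qed.

Lemma intr_sum_probes (F : nat -> nat -> nat -> int) :
  (sum_probes F)%:~R = sum_probes (fun a b c => (F a b c)%:~R : C).
Proof.
rewrite /sum_probes rmorph_sum; apply: eq_bigr => a _.
by rewrite rmorph_sum; apply: eq_bigr => b _; rewrite rmorph_sum.
Qed.

Lemma eq_big_In (T : Type) (s : seq T) (F G : T -> C) :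
  (forall x, List.In x s -> F x = G x) -> \sum_(x <- s) F x = \sum_(x <- s) G x.
Proof.
elim: s => [|y s IHs] FG; first by rewrite !big_nil.
by rewrite !big_cons FG ?IHs //; [move=> x xs; apply: FG; right | left].
Qed.

(* An integer combination of the probe weights that vanishes on every Gamma-compatible
   Kraus decomposition: it is orthogonal to the overlap pattern of every ket in T. *)
Definition certificate (c : nat -> nat -> nat -> int) : Prop :=
  forall t, t \in Tset -> sum_probes (fun u1 u2 u3 =>
    c u1 u2 u3 * (probe_coef4 t.1.1 u1 * probe_coef4 t.1.2 u2 * probe_coef4 t.2 u3)) = 0.

Lemma certificate_vanishes (Ls : seq (op Hout Hin)) (c : nat -> nat -> nat -> int) :
  (forall L, List.In L Ls -> Gamma_compatible L) -> certificate c ->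
  sum_probes (fun u1 u2 u3 => (c u1 u2 u3)%:~R * kraus_probe_weight Ls u1 u2 u3) = 0.
Proof.
move=> compat c_cert.
pose g L o := let v := probes (label o.1.1) (label o.1.2) (label o.2) in
  opcoord L o v * (opcoord L o v)^*.
have expand u1 u2 u3 : (u1 < 4)%N -> (u2 < 4)%N -> (u3 < 4)%N ->
    64%:R * ((c u1 u2 u3)%:~R * kraus_probe_weight Ls u1 u2 u3) =
    \sum_(L <- Ls) \sum_o (c u1 u2 u3 * probe_overlapZ (labels o) u1 u2 u3)%:~R * g L o.
  move=> u1_lt4 u2_lt4 u3_lt4; rewrite /kraus_probe_weight !mulr_sumr.
  apply: eq_big_In => L L_in; rewrite /sqnorm !mulr_sumr; apply: eq_bigr => o _.
  by rewrite mulrCA (coord_sqnorm_compatible o (compat L L_in)) // intrM mulrA.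
have overlap0 o : sum_probes (fun u1 u2 u3 => c u1 u2 u3 * probe_overlapZ (labels o) u1 u2 u3) = 0.
  have [o_in|o_notin] := boolP (labels o \in Tset); rewrite /probe_overlapZ.
    by rewrite o_in; apply: c_cert.
  rewrite (negbTE o_notin) /sum_probes big1 // => ? _; rewrite big1 // => ? _.
  by rewrite big1 // => ? _; rewrite mulr0.
suff : 64%:R * sum_probes (fun u1 u2 u3 => (c u1 u2 u3)%:~R * kraus_probe_weight Ls u1 u2 u3) = 0.
  by move/eqP; rewrite mulf_eq0 pnatr_eq0 => /eqP.
rewrite sum_probes_mull (eq_sum_probes expand) exchange_sum_probes big1 // => L _.
rewrite exchange_sum_probes big1 // => o _.
by rewrite -sum_probes_mulr -intr_sum_probes overlap0 mul0r.
Qed.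

(** * The invariant of a compatible protocol *)

Definition probe_invariant (N : nat -> C) : Prop :=
  forall u, (u < 4)%N -> N u = probe_weight u * N 0%N.

Definition kraus_invariant (J : finType) (Ms : seq (op J Q)) : Prop :=
  probe_invariant (fun u => kraus_weight Ms (probe u)).

Lemma probe_invariant_of_relations (N : nat -> C) (c : C) : c != 0 ->
  (N 0%N - N 1%N) * c = 0 -> (N 2%N - N 3%N) * c = 0 ->
  (2 * N 0%N + 2 * N 1%N - N 2%N - N 3%N) * c = 0 -> probe_invariant N.
Proof.
move=> c_neq0; have cancel_c x : x * c = 0 -> x = 0.
  by move/eqP; rewrite mulf_eq0 (negbTE c_neq0) orbF => /eqP.
move=> /cancel_c/eqP; rewrite subr_eq0 => /eqP N01 /cancel_c/eqP; rewrite subr_eq0 => /eqP N23.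
move=> /cancel_c; rewrite -N01 -N23 => rel.
have N2 : N 2%N = 2 * N 0%N.
  apply/eqP; rewrite -subr_eq0.
  have -> : N 2%N - 2 * N 0%N = - 2^-1 * (2 * N 0%N + 2 * N 0%N - N 2%N - N 2%N) by field.
  by rewrite rel mulr0.
by case=> [|[|[|[|u]]]] // _; rewrite /probe_weight /= ?mul1r // -?N23 -?N01.
Qed.

Lemma certificate_vanishes_on (Ls : seq (op Hout Hin)) c (F : nat -> nat -> nat -> C) :
  (forall L, List.In L Ls -> Gamma_compatible L) -> certificate c ->
  (forall u1 u2 u3, (u1 < 4)%N -> (u2 < 4)%N -> (u3 < 4)%N ->
     kraus_probe_weight Ls u1 u2 u3 = F u1 u2 u3) ->
  sum_probes (fun u1 u2 u3 => (c u1 u2 u3)%:~R * F u1 u2 u3) = 0.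
Proof.
move=> compat c_cert weights; rewrite -(certificate_vanishes compat c_cert).
by apply: eq_sum_probes => u1 u2 u3 *; rewrite weights.
Qed.

Definition alphaZ (k u : nat) : int :=
  match k, u with
  | 0%N, 0%N => 1 | 0%N, 1%N => -1
  | 1%N, 2%N => 1 | 1%N, 3%N => -1
  | 2%N, 0%N => 2 | 2%N, 1%N => 2 | 2%N, 2%N => -1 | 2%N, 3%N => -1
  | _, _ => 0 end.

Definition lambdaA (k v w : nat) : int :=
  match k, v, w with
  | 0%N, 0%N, 0%N => -6 | 0%N, 0%N, 1%N => 2 | 0%N, 1%N, 2%N => -3 | 0%N, 1%N, 3%N => 1
  | 0%N, 2%N, 2%N => 2 | 0%N, 3%N, 0%N => 4
  | 1%N, 0%N, 0%N => 10 | 1%N, 0%N, 1%N => 2 | 1%N, 1%N, 2%N => 5 | 1%N, 1%N, 3%N => 1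
  | 1%N, 2%N, 2%N => -2 | 1%N, 3%N, 0%N => -4
  | 2%N, 0%N, 0%N => 8
  | _, _, _ => 0 end.

Definition lambdaB (k v w : nat) : int :=
  match k, v, w with
  | 0%N, 0%N, 0%N => -6 | 0%N, 0%N, 1%N => 2 | 0%N, 1%N, 2%N => 1 | 0%N, 1%N, 3%N => -3
  | 0%N, 2%N, 0%N => 4 | 0%N, 3%N, 3%N => 2
  | 1%N, 0%N, 0%N => 10 | 1%N, 0%N, 1%N => 2 | 1%N, 1%N, 2%N => 1 | 1%N, 1%N, 3%N => 5
  | 1%N, 2%N, 0%N => -4 | 1%N, 3%N, 3%N => -2
  | 2%N, 0%N, 0%N => 8
  | _, _, _ => 0 end.

(* Paired against weights [N u_p] times a product of probe weights of the other two
   parties, [partyp_cert k] extracts the k-th relation of [probe_invariant_of_relations],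
   whose coefficients are [alphaZ k]; the [lambda] tables were found by linear algebra. *)
Definition party1_cert (k u1 u2 u3 : nat) : int := alphaZ k u1 * lambdaA k u2 u3.
Definition party2_cert (k u1 u2 u3 : nat) : int := alphaZ k u2 * lambdaB k u1 u3.
Definition party3_cert (k u1 u2 u3 : nat) : int := alphaZ k u3 * lambdaA k u1 u2.

(* Bigops are locked, so [vm_compute] checks certificates on [foldr] sums. *)
Definition sum4Z (f : nat -> int) : int := foldr (fun x acc => f x + acc) 0 (iota 0 4).

Definition certificateb (c : nat -> nat -> nat -> int) : bool :=
  all (fun t => sum4Z (fun u1 => sum4Z (fun u2 => sum4Z (fun u3 =>
    c u1 u2 u3 * (probe_coef4 t.1.1 u1 * probe_coef4 t.1.2 u2 * probe_coef4 t.2 u3)))) == 0) Tset.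

Lemma certificateP c : certificateb c -> certificate c.
Proof.
have sum4ZE (f : nat -> int) : \sum_(x <- iota 0 4) f x = sum4Z f.
  by rewrite /sum4Z; elim: (iota 0 4) => [|x s IHs]; rewrite ?big_nil ?big_cons ?IHs.
move=> /allP c_ok t /c_ok /eqP <-; rewrite /sum_probes sum4ZE.
congr sum4Z; apply: functional_extensionality => u1; rewrite sum4ZE.
by congr sum4Z; apply: functional_extensionality => u2; rewrite sum4ZE.
Qed.

Lemma party1_certificate k : (k < 3)%N -> certificate (party1_cert k).
Proof. by move=> k_lt3; apply: certificateP; case: k k_lt3 => [|[|[|k]]] //; vm_compute. Qed.

Lemma party2_certificate k : (k < 3)%N -> certificate (party2_cert k).
Proof. by move=> k_lt3; apply: certificateP; case: k k_lt3 => [|[|[|k]]] //; vm_compute. Qed.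

Lemma party3_certificate k : (k < 3)%N -> certificate (party3_cert k).
Proof. by move=> k_lt3; apply: certificateP; case: k k_lt3 => [|[|[|k]]] //; vm_compute. Qed.

Lemma iota04 : iota 0 4 = [:: 0; 1; 2; 3]%N.
Proof. by []. Qed.

Section PartyInvariant.
Variables (Ls : seq (op Hout Hin)) (N : nat -> C).
Hypothesis compat : forall L, List.In L Ls -> Gamma_compatible L.

Lemma party1_invariant (c2 c3 : C) : c2 != 0 -> c3 != 0 ->
  (forall u1 u2 u3, (u1 < 4)%N -> (u2 < 4)%N -> (u3 < 4)%N ->
     kraus_probe_weight Ls u1 u2 u3 = N u1 * (probe_weight u2 * c2) * (probe_weight u3 * c3)) ->
  probe_invariant N.
Proof.
move=> c2_neq0 c3_neq0 weights.
have rel k (k_lt3 : (k < 3)%N) := certificate_vanishes_on compat (party1_certificate k_lt3) weights.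
move: (rel 0%N isT) (rel 1%N isT) (rel 2%N isT).
rewrite /sum_probes iota04 !big_cons !big_nil /party1_cert !intrM /probe_weight /= => E0 E1 E2.
apply: (@probe_invariant_of_relations _ (8 * c2 * c3)); rewrite ?mulf_neq0 ?pnatr_eq0 //.
- by rewrite -[RHS]E0; ring.
- by rewrite -[RHS]E1; ring.
- by rewrite -[RHS]E2; ring.
Qed.

Lemma party2_invariant (c1 c3 : C) : c1 != 0 -> c3 != 0 ->
  (forall u1 u2 u3, (u1 < 4)%N -> (u2 < 4)%N -> (u3 < 4)%N ->
     kraus_probe_weight Ls u1 u2 u3 = (probe_weight u1 * c1) * N u2 * (probe_weight u3 * c3)) ->
  probe_invariant N.
Proof.
move=> c1_neq0 c3_neq0 weights.
have rel k (k_lt3 : (k < 3)%N) := certificate_vanishes_on compat (party2_certificate k_lt3) weights.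
move: (rel 0%N isT) (rel 1%N isT) (rel 2%N isT).
rewrite /sum_probes iota04 !big_cons !big_nil /party2_cert !intrM /probe_weight /= => E0 E1 E2.
apply: (@probe_invariant_of_relations _ (8 * c1 * c3)); rewrite ?mulf_neq0 ?pnatr_eq0 //.
- by rewrite -[RHS]E0; ring.
- by rewrite -[RHS]E1; ring.
- by rewrite -[RHS]E2; ring.
Qed.

Lemma party3_invariant (c1 c2 : C) : c1 != 0 -> c2 != 0 ->
  (forall u1 u2 u3, (u1 < 4)%N -> (u2 < 4)%N -> (u3 < 4)%N ->
     kraus_probe_weight Ls u1 u2 u3 = (probe_weight u1 * c1) * (probe_weight u2 * c2) * N u3) ->
  probe_invariant N.
Proof.
move=> c1_neq0 c2_neq0 weights.
have rel k (k_lt3 : (k < 3)%N) := certificate_vanishes_on compat (party3_certificate k_lt3) weights.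
move: (rel 0%N isT) (rel 1%N isT) (rel 2%N isT).
rewrite /sum_probes iota04 !big_cons !big_nil /party3_cert !intrM /probe_weight /= => E0 E1 E2.
apply: (@probe_invariant_of_relations _ (8 * c1 * c2)); rewrite ?mulf_neq0 ?pnatr_eq0 //.
- by rewrite -[RHS]E0; ring.
- by rewrite -[RHS]E1; ring.
- by rewrite -[RHS]E2; ring.
Qed.

End PartyInvariant.

(* [Tset] is a Latin square: the last two entries of a triple determine the first. *)
Definition latin_first (b c : nat) : nat :=
  match b, c with
  | 0%N, 0%N => 0 | 0%N, 1%N => 2 | 0%N, 2%N => 3 | 0%N, _ => 1
  | 1%N, 0%N => 3 | 1%N, 1%N => 1 | 1%N, 2%N => 0 | 1%N, _ => 2
  | 2%N, 0%N => 1 | 2%N, 1%N => 3 | 2%N, 2%N => 2 | 2%N, _ => 0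
  | _, 0%N => 2 | _, 1%N => 0 | _, 2%N => 1 | _, _ => 3 end%N.

Lemma Tset_latin a b c : (a, b, c) \in Tset -> a = latin_first b c.
Proof.
have latin : all (fun t => t.1.1 == latin_first t.1.2 t.2) Tset by [].
by move/(allP latin)/eqP.
Qed.

Lemma kraus_weight_neq0 (J I : finType) (Ms : seq (op J I)) u : kraus_weight Ms u != 0 ->
  exists m o, List.In m Ms /\ opcoord m o u != 0.
Proof.
move/big_seq_neq0 => [m m_in /big_seq_neq0[o _ mo_neq0]]; exists m, o; split => //.
by apply: contraNneq mo_neq0 => ->; rewrite mul0r.
Qed.

Lemma probe_weight_neq0 u : probe_weight u != 0.
Proof. by rewrite /probe_weight; case: ifP; rewrite ?oner_eq0 ?pnatr_eq0. Qed.

(* Outputs [o2], [o3] of parties 2 and 3 seen on probe 0 force party 1's label, so party 1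
   kills the orthogonal probe; its invariant then kills probe 0 as well. *)
Lemma leaf_weight0 (M1s M2s M3s : seq (op QQ Q)) : kraus_invariant M1s ->
  (forall L, List.In L (tens3_kraus M1s M2s M3s) -> Gamma_compatible L) ->
  kraus_weight M1s (probe 0) * kraus_weight M2s (probe 0) * kraus_weight M3s (probe 0) = 0.
Proof.
move=> inv1 compat; apply/eqP; rewrite !mulf_eq0 -!orbA; apply/negPn/negP.
rewrite !negb_or => /and3P[w1_neq0 /kraus_weight_neq0[m2 [o2 [m2_in m2o2]]]].
move=> /kraus_weight_neq0[m3 [o3 [m3_in m3o3]]].
set p := orth_probe (latin_first (label o2) (label o3)).
have kill m1 o1 : List.In m1 M1s -> opcoord m1 o1 (probe p) = 0.
  move=> m1_in; have forb : forbidden ((o1, o2), o3) p 0 0.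
    rewrite /forbidden /labels /=.
    have [->|label_neq] := eqVneq (label o1) (latin_first (label o2) (label o3)).
      by rewrite eqxx orbT.
    by apply/orP; left; apply: contra label_neq => /Tset_latin ->.
  have := compat _ (In_tens3_kraus m1_in m2_in m3_in) _ _ _ _ forb.
  by rewrite opcoord_tens3 /= => /eqP; rewrite !mulf_eq0 (negbTE m2o2) (negbTE m3o3) !orbF => /eqP.
have : kraus_weight M1s (probe p) = 0.
  rewrite /kraus_weight (@eq_big_In _ _ _ (fun _ => 0)) ?big1 // => m1 m1_in.
  by rewrite /sqnorm big1 // => o _; rewrite kill ?mul0r.
rewrite inv1; last by rewrite /p; case: latin_first => [|[|[|[|]]]].
by move/eqP; rewrite mulf_eq0 (negbTE (probe_weight_neq0 _)) (negbTE w1_neq0).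
Qed.

Lemma children_weight0 (J J' I : finType) (n : nat) (m : 'I_n -> nat)
    (K : forall i : 'I_n, 'I_(m i) -> op J' J) (Ms : seq (op J I)) (u : vec I) :
  instrument_complete K -> (forall i, kraus_weight (after_outcome K i Ms) u = 0) ->
  kraus_weight Ms u = 0.
Proof. by move=> K_complete w0; rewrite -(kraus_weight_after_outcome _ _ K_complete) big1. Qed.

(* Induction on the protocol: the invariant is inherited by the children of every round
   (by the party invariants) and a nonzero weight would survive down to a leaf. *)
Lemma protocol_probe_weight0 (A B D : finType) (P : locc_protocol QQ QQ QQ A B D)
    (M1s : seq (op A Q)) (M2s : seq (op B Q)) (M3s : seq (op D Q)) :
  kraus_invariant M1s -> kraus_invariant M2s -> kraus_invariant M3s ->
  (forall L, List.In L (protocol_kraus P M1s M2s M3s) -> Gamma_compatible L) ->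
  kraus_weight M1s (probe 0) * kraus_weight M2s (probe 0) * kraus_weight M3s (probe 0) = 0.
Proof.
elim: P M1s M2s M3s => {A B D}
  [|A B D A' n m K HK next IH|A B D B' n m K HK next IH|A B D D' n m K HK next IH]
  M1s M2s M3s inv1 inv2 inv3 /= compat; first exact: leaf_weight0.
all: have compat_i i L L_in := compat L (In_flatten_enum (i := i) L_in).
- have [->|w2] := eqVneq (kraus_weight M2s (probe 0)) 0; first by rewrite mulr0 mul0r.
  have [->|w3] := eqVneq (kraus_weight M3s (probe 0)) 0; first by rewrite mulr0.
  rewrite (children_weight0 (Ms := M1s) (u := probe 0) HK) ?mul0r // => i.
  have inv_i : kraus_invariant (after_outcome K i M1s).
    apply: (party1_invariant (compat_i i) w2 w3) => u1 u2 u3 _ u2_lt4 u3_lt4.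
    by rewrite /kraus_probe_weight protocol_kraus_weight (inv2 _ u2_lt4) (inv3 _ u3_lt4).
  move: (IH i _ _ _ inv_i inv2 inv3 (compat_i i)) => /eqP.
  by rewrite !mulf_eq0 (negbTE w2) (negbTE w3) !orbF => /eqP.
- have [->|w1] := eqVneq (kraus_weight M1s (probe 0)) 0; first by rewrite !mul0r.
  have [->|w3] := eqVneq (kraus_weight M3s (probe 0)) 0; first by rewrite mulr0.
  rewrite (children_weight0 (Ms := M2s) (u := probe 0) HK) ?mulr0 ?mul0r // => i.
  have inv_i : kraus_invariant (after_outcome K i M2s).
    apply: (party2_invariant (compat_i i) w1 w3) => u1 u2 u3 u1_lt4 _ u3_lt4.
    by rewrite /kraus_probe_weight protocol_kraus_weight (inv1 _ u1_lt4) (inv3 _ u3_lt4).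
  move: (IH i _ _ _ inv1 inv_i inv3 (compat_i i)) => /eqP.
  by rewrite !mulf_eq0 (negbTE w1) (negbTE w3) !orbF => /eqP.
- have [->|w1] := eqVneq (kraus_weight M1s (probe 0)) 0; first by rewrite !mul0r.
  have [->|w2] := eqVneq (kraus_weight M2s (probe 0)) 0; first by rewrite mulr0 mul0r.
  rewrite (children_weight0 (Ms := M3s) (u := probe 0) HK) ?mulr0 // => i.
  have inv_i : kraus_invariant (after_outcome K i M3s).
    apply: (party3_invariant (compat_i i) w1 w2) => u1 u2 u3 u1_lt4 u2_lt4 _.
    by rewrite /kraus_probe_weight protocol_kraus_weight (inv1 _ u1_lt4) (inv2 _ u2_lt4).
  move: (IH i _ _ _ inv1 inv2 inv_i (compat_i i)) => /eqP.
  by rewrite !mulf_eq0 (negbTE w1) (negbTE w2) !orbF => /eqP.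
Qed.

Lemma kraus_weight_id u : (u < 4)%N -> kraus_weight [:: @idop Q] (probe u) = probe_weight u.
Proof.
move=> u_lt4; rewrite /kraus_weight big_cons big_nil addr0 /sqnorm sumQ.
have coord_id o : opcoord (@idop Q) o (probe u) = probe u o.
  rewrite /opcoord (bigD1 o) //= big1 ?addr0 /idop ?eqxx ?mul1r // => i /negbTE i_neq.
  by rewrite eq_sym i_neq mul0r.
rewrite !coord_id {coord_id}; case: u u_lt4 => [|[|[|[|u]]]] //= _;
  by rewrite /probe_weight /= ?rmorphN ?rmorph1 ?rmorph0; ring.
Qed.

Lemma kraus_invariant_id : kraus_invariant [:: @idop Q].
Proof. by move=> u u_lt4; rewrite !kraus_weight_id // /probe_weight /= mulr1. Qed.

Lemma Gamma_not_LOCC (Phi : qmap Hin Hout) : choi Phi = GammaChoi -> ~ finite_round_LOCC Phi.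
Proof.
move=> choi_Phi [P P_Phi].
set Ls := protocol_kraus P [:: @idop Q] [:: @idop Q] [:: @idop Q].
have Phi_kraus X : Phi X = kraus_sum Ls X.
  rewrite -P_Phi -locc_map_kraus; congr (locc_map P _).
  by apply: op_ext => a b; rewrite kraus_sum_tens3E !big_cons !big_nil !addr0 tens3_id conjop1.
have choi_Ls x y : \sum_(L <- Ls) L x.2 x.1 * (L y.2 y.1)^* = GammaChoi x y.
  by rewrite -choi_Phi /choi Phi_kraus kraus_sum_unitop.
have := protocol_probe_weight0 kraus_invariant_id kraus_invariant_id kraus_invariant_id
  (kraus_Gamma_compatible choi_Ls).
by rewrite !kraus_weight_id // /probe_weight /= !mulr1 => /eqP; rewrite oner_eq0.
Qed.

(** * A separable Kraus decomposition of Gamma *)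

Definition invsqrt2 : C := (sqrtC 2)^-1.

Lemma invsqrt2_conj : invsqrt2^* = invsqrt2.
Proof. by rewrite geC0_conj // invr_ge0 sqrtC_ge0 ler0n. Qed.

Lemma invsqrt2_sq : invsqrt2 * invsqrt2 = 2^-1.
Proof. by rewrite /invsqrt2 -invfM -expr2 sqrtCK. Qed.

Definition Tnth (k : 'I_16) : nat * nat * nat := nth (0, 0, 0)%N Tset k.

Lemma sum_Tnth (F : nat * nat * nat -> C) : \sum_(k < 16) F (Tnth k) = \sum_(t <- Tset) F t.
Proof. by rewrite (big_nth (0, 0, 0)%N) big_mkord. Qed.

Definition kraus1 (k : 'I_16) : op QQ Q := fun o i => invsqrt2 * bket (Tnth k).1.1 (i, o).
Definition kraus2 (k : 'I_16) : op QQ Q := fun o i => bket (Tnth k).1.2 (i, o).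
Definition kraus3 (k : 'I_16) : op QQ Q := fun o i => bket (Tnth k).2 (i, o).
Definition Gamma_kraus (k : 'I_16) : op Hout Hin := tens3 (kraus1 k) (kraus2 k) (kraus3 k).

Lemma Gamma_krausE k o i : Gamma_kraus k o i = invsqrt2 * tket (Tnth k) i o.
Proof. by rewrite /Gamma_kraus /tens3 /tensop /kraus1 /kraus2 /kraus3 /tket /=; ring. Qed.

Lemma choi_Gamma_kraus : choi (kraus_map Gamma_kraus) = GammaChoi.
Proof.
apply: op_ext => -[i o] [j o']; rewrite kraus_map_choi GammaChoiE /= -sum_Tnth mulr_sumr.
apply: eq_bigr => k _; rewrite !Gamma_krausE rmorphM /= invsqrt2_conj -invsqrt2_sq; ring.
Qed.

Definition bket_amp (x : nat) : C := if (x < 2)%N then 1 else invsqrt2.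
Definition bket_signZ (x a : nat) : int :=
  match x with
  | 0%N => (a == 0%N)%:Z | 1%N => (a == 1%N)%:Z | 2%N => 1
  | _ => if a == 0%N then 1 else -1
  end.
Definition bket_amp2Z (x : nat) : int := if (x < 2)%N then 2 else 1.

Lemma bketE x (i : Q) (o : QQ) : (x < 4)%N ->
  bket x (i, o) = bket_amp x * (bket_signZ x (val i))%:~R * (label o == x)%:R.
Proof.
move=> x_lt4; case: o => [[[|[|o1]] H1] [[|[|o2]] H2]] //; case: i => [[|[|i]] Hi] //;
  by case: x x_lt4 => [|[|[|[|x]]]] //= _;
     rewrite /bket /eplus /eminus /e0 /e1 /e2 /bket_amp /invsqrt2 /label /=; ring.
Qed.

Lemma bket_amp_sq x : bket_amp x * (bket_amp x)^* = (bket_amp2Z x)%:~R * 2^-1.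
Proof.
rewrite /bket_amp /bket_amp2Z; case: ifP => _; last by rewrite invsqrt2_conj invsqrt2_sq mul1r.
by rewrite rmorph1 mulr1; field.
Qed.

Lemma sum_label x : (x < 4)%N -> \sum_(o : QQ) (label o == x)%:R * ((label o == x)%:R)^* = 1 :> C.
Proof.
move=> x_lt4; rewrite sum_pair /QQ !sumQ /label /=.
by case: x x_lt4 => [|[|[|[|x]]]] //= _; rewrite ?rmorph1 ?rmorph0; ring.
Qed.

Definition bket_gram (x : nat) (a b : Q) : C := \sum_(o : QQ) bket x (a, o) * (bket x (b, o))^*.

Lemma bket_gramE x a b : (x < 4)%N ->
  bket_gram x a b = (bket_amp2Z x)%:~R * 2^-1 * (bket_signZ x (val a) * bket_signZ x (val b))%:~R.
Proof.
move=> x_lt4; rewrite /bket_gram.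
under eq_bigr do rewrite !bketE // !rmorphM /= !rmorph_int.
rewrite (eq_bigr (fun o => (bket_amp x * (bket_amp x)^* * (bket_signZ x (val a))%:~R *
   (bket_signZ x (val b))%:~R) * ((label o == x)%:R * ((label o == x)%:R)^*))); last first.
  by move=> o _; ring.
by rewrite -mulr_sumr sum_label // mulr1 bket_amp_sq intrM; ring.
Qed.

Lemma Gamma_kraus_gram (k : 'I_16) (i i' : Hin) :
  \sum_(j : Hout) Gamma_kraus k j i * (Gamma_kraus k j i')^* =
  2^-1 * bket_gram (Tnth k).1.1 i.1.1 i'.1.1 * bket_gram (Tnth k).1.2 i.1.2 i'.1.2 *
  bket_gram (Tnth k).2 i.2 i'.2.
Proof.
under eq_bigr do rewrite !Gamma_krausE rmorphM /= invsqrt2_conj mulrACA invsqrt2_sq.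
rewrite -mulr_sumr -!mulrA; congr (_ * _); rewrite !mulrA /bket_gram -sum_tri_mul.
by apply: eq_bigr => j _; rewrite /tket !rmorphM /=; ring.
Qed.

Definition sumTZ (f : nat * nat * nat -> int) : int := foldr (fun t acc => f t + acc) 0 Tset.

Lemma sumTZE (f : nat * nat * nat -> int) : \sum_(t <- Tset) f t = sumTZ f.
Proof. by rewrite /sumTZ; elim: Tset => [|t s IHs]; rewrite ?big_nil ?big_cons ?IHs. Qed.

Definition completeness_term (a1 a2 a3 b1 b2 b3 : nat) (t : nat * nat * nat) : int :=
  (bket_amp2Z t.1.1 * (bket_signZ t.1.1 a1 * bket_signZ t.1.1 b1)) *
  (bket_amp2Z t.1.2 * (bket_signZ t.1.2 a2 * bket_signZ t.1.2 b2)) *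
  (bket_amp2Z t.2 * (bket_signZ t.2 a3 * bket_signZ t.2 b3)).

Definition completeness_check : bool :=
  all (fun a1 => all (fun a2 => all (fun a3 => all (fun b1 => all (fun b2 => all (fun b3 =>
    sumTZ (completeness_term a1 a2 a3 b1 b2 b3) == 16 * ([&& a1 == b1, a2 == b2 & a3 == b3])%:Z
  ) (iota 0 2)) (iota 0 2)) (iota 0 2)) (iota 0 2)) (iota 0 2)) (iota 0 2).

Lemma completeness_checkP : completeness_check.
Proof. by vm_compute. Qed.

Lemma Gamma_kraus_complete (i i' : Hin) :
  \sum_(k < 16) \sum_(j : Hout) Gamma_kraus k j i * (Gamma_kraus k j i')^* = (i == i')%:R.
Proof.
under eq_bigr do rewrite Gamma_kraus_gram.
rewrite (sum_Tnth (fun t => 2^-1 * bket_gram t.1.1 i.1.1 i'.1.1 * bket_gram t.1.2 i.1.2 i'.1.2 *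
  bket_gram t.2 i.2 i'.2)) big_seq.
rewrite (eq_bigr (fun t => (2^-1)^+4 *
    (completeness_term (val i.1.1) (val i.1.2) (val i.2)
                       (val i'.1.1) (val i'.1.2) (val i'.2) t)%:~R));
  last by move=> t /Tset_lt4[t1_lt4 t2_lt4 t3_lt4]; rewrite !bket_gramE // !intrM; ring.
rewrite -big_seq -mulr_sumr -rmorph_sum sumTZE.
have iota2 (j : Q) : val j \in iota 0 2 by rewrite mem_iota ltn_ord.
move: completeness_checkP.
move=> /allP/(_ _ (iota2 i.1.1))/allP/(_ _ (iota2 i.1.2))/allP/(_ _ (iota2 i.2)).
move=> /allP/(_ _ (iota2 i'.1.1))/allP/(_ _ (iota2 i'.1.2))/allP/(_ _ (iota2 i'.2))/eqP ->.
rewrite !val_eqE rmorphM /=.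
case: i i' => [[i1 i2] i3] [[j1 j2] j3] /=; rewrite !xpair_eqE /=.
by case: (i1 == j1); case: (i2 == j2); case: (i3 == j3); rewrite /= ?mulr0 //; field.
Qed.

Lemma Gamma_separable_CPTP :
  exists Phi : qmap Hin Hout, choi Phi = GammaChoi /\ CPTP Phi /\ separable3 Phi.
Proof.
exists (kraus_map Gamma_kraus); split; first exact: choi_Gamma_kraus.
split; last by exists 16%N, kraus1, kraus2, kraus3.
split; [exact: kraus_map_linear | exact: kraus_map_CP | ].
exact/kraus_map_TP/Gamma_kraus_complete.
Qed.

Theorem mainTheorem19 :
  (exists Phi : qmap Hin Hout,
      choi Phi = GammaChoi /\ CPTP Phi /\ separable3 Phi) /\
  (forall Phi : qmap Hin Hout,
      linear_qmap Phi -> choi Phi = GammaChoi -> ~ finite_round_LOCC Phi).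
Proof.
split; first exact: Gamma_separable_CPTP.
by move=> Phi _; apply: Gamma_not_LOCC.
Qed.
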